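(* For any positive integer $k$, there exist connected graphs $H$ and $G$ with $H \subset G$ such that both $\frac{\dim_f(H)}{\dim_f(G)}$ and $\frac{\dim_{k,f}(H)}{\dim_{k,f}(G)}$ can be arbitrarily large; that is, for every real $C>0$ there exist connected graphs $H\subset G$ with $\frac{\dim_f(H)}{\dim_f(G)}>C$ and $\frac{\dim_{k,f}(H)}{\dim_{k,f}(G)}>C$.
   Context: $H\subset G$ means $H$ is a subgraph of $G$. $d(x,y)$ is the distance in $G$. For a function $g$ on $V(G)$ and $U\subseteq V(G)$, $g(U)=\sum_{s\in U}g(s)$. $R\{x,y\}=\{z: d(x,z)\ne d(y,z)\}$; $g:V(G)\to[0,1]$ is a resolving function if $g(R\{x,y\})\ge1$ for all distinct $x,y$; $\dim_f(G)$ is the minimum of $g(V(G))$ over resolving functions. For a positive integer $k$, $d_k(x,y)=\min\{d(x,y),k+1\}$, $R_k\{x,y\}=\{z: d_k(x,z)\neq d_k(y,z)\}$; $h:V(G)\to[0,1]$ is a $k$-truncated resolving function if $h(R_k\{x,y\})\ge 1$ for all distinct $x,y$, and $\dim_{k,f}(G)$ is the minimum of $h(V(G))$ over such $h$. *)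

From HB Require Import structures.
From mathcomp Require Import all_boot all_order all_algebra.
From mathcomp Require Import all_classical all_reals.
Set Implicit Arguments. Unset Strict Implicit. Unset Printing Implicit Defensive.
Import Order.TTheory GRing.Theory Num.Theory.
Local Open Scope ring_scope.
Local Open Scope classical_set_scope.

Record graph := Graph {
  gV : finType;
  adj : rel gV;
  adj_sym : symmetric adj;
  adj_irr : irreflexive adj }.

Definition reachn (G : graph) (n : nat) (x y : gV G) : bool :=
  [exists p : n.-tuple (gV G), path (@adj G) x p && (last x p == y)].

(* Graph distance: least n (< #|V|) with a walk of length n from x to y.
   For connected graphs this is the usual shortest-path distance. *)
Definition dist (G : graph) (x y : gV G) : nat :=
  find (fun n => @reachn G n x y) (iota 0 #|gV G|).

Definition connected (G : graph) : Prop :=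
  forall x y : gV G, connect (@adj G) x y.

Definition subgraph (H G : graph) : Prop :=
  exists f : gV H -> gV G, injective f /\
    forall x y, adj x y -> adj (f x) (f y).

Definition distk (k : nat) (G : graph) (x y : gV G) : nat :=
  minn (dist x y) k.+1.

Definition resolving_wrt (R : realType) (G : graph)
    (D : gV G -> gV G -> nat) (g : gV G -> R) : Prop :=
  (forall z, 0 <= g z <= 1) /\
  forall x y : gV G, x != y ->
    1 <= \sum_(z : gV G | D x z != D y z) g z.

Definition resolving_fun (R : realType) (G : graph) (g : gV G -> R) : Prop :=
  @resolving_wrt R G (@dist G) g.

Definition ktrunc_resolving_fun (R : realType) (k : nat) (G : graph)
    (g : gV G -> R) : Prop :=
  @resolving_wrt R G (@distk k G) g.

(* dim_f(G) = min of g(V) over resolving functions (the minimum is attained;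
   we take the infimum). *)
Definition dimf (R : realType) (G : graph) : R :=
  inf [set s : R | exists g : gV G -> R, resolving_fun g /\ s = \sum_(z : gV G) g z].

Definition dimkf (R : realType) (k : nat) (G : graph) : R :=
  inf [set s : R | exists g : gV G -> R, ktrunc_resolving_fun k g /\
                   s = \sum_(z : gV G) g z].

(** The graph [G_t] has an apex joined to everything, [t] points and one vertex
    for each subset of the points, a point being adjacent to the subsets that
    contain it; [H_t] is the spanning star of [G_t] centred at the apex.  Both
    graphs have diameter at most two, so for [k >= 1] truncation at [k + 1]
    changes nothing and [dim_{k,f} = dim_f].  In [G_t] the apex and the points
    form a resolving set (two subsets are told apart by a point of their
    symmetric difference), so [dim_f(G_t) <= t + 1].  In the star any two
    leaves are resolved only by themselves, so a resolving function gives
    weight [>= 1/2] to all leaves but one, and [dim_f(H_t) >= (t + 2^t - 1)/2].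
    The ratio is thus exponential in [t]. *)
From HB Require Import structures.
From mathcomp Require Import all_boot all_order all_algebra.
From mathcomp Require Import all_classical all_reals.
From mathcomp Require Import zify ring lra.
Set Implicit Arguments. Unset Strict Implicit. Unset Printing Implicit Defensive.
Import Order.TTheory GRing.Theory Num.Theory.
Local Open Scope ring_scope.

Section Distance.
Variable G : graph.
Implicit Types x y z : gV G.

Lemma reachn0 x y : reachn 0 x y = (x == y).
Proof.
apply/existsP/idP => [[p /andP[_ /eqP <-]]|/eqP <-]; first by rewrite tuple0.
by exists [tuple]; rewrite /= eqxx.
Qed.

Lemma reachn1 x y : reachn 1 x y = adj x y.
Proof.
apply/existsP/idP => [[[[|a [|b s]] //= _] /andP[]]|xy].
  by rewrite andbT => ? /eqP <-.
by exists [tuple y]; rewrite /= xy eqxx.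
Qed.

Lemma reachn2 x y z : adj x y -> adj y z -> reachn 2 x z.
Proof. by move=> xy yz; apply/existsP; exists [tuple y; z]; rewrite /= xy yz eqxx. Qed.

Lemma dist_least x y n : (n < #|gV G|)%N ->
  (forall m, (m < n)%N -> ~~ reachn m x y) -> reachn n x y -> dist x y = n.
Proof.
move=> n_lt before reach_n; rewrite /dist; set P := fun n => reachn n x y.
have hasP : has P (iota 0 #|gV G|) by apply/hasP; exists n; rewrite ?mem_iota.
have find_lt : (find P (iota 0 #|gV G|) < #|gV G|)%N.
  by rewrite -[X in (_ < X)%N](size_iota 0) -has_find.
have := nth_find 0 hasP; rewrite nth_iota // add0n => reach_find.
case: (ltngtP (find P (iota 0 #|gV G|)) n) => // [/before /negP //|n_lt_find].
by have := before_find 0 n_lt_find; rewrite nth_iota // add0n /P reach_n.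
Qed.

Lemma dist_eq0 x y : (dist x y == 0%N) = (x == y).
Proof.
have V_gt0 : (0 < #|gV G|)%N by apply/card_gt0P; exists x.
apply/eqP/eqP => [|<-]; last by apply: dist_least; rewrite ?reachn0.
rewrite /dist => find0; set P := fun n => reachn n x y.
have hasP : has P (iota 0 #|gV G|) by rewrite has_find size_iota find0.
by have := nth_find 0 hasP; rewrite find0 nth_iota // /P reachn0 => /eqP.
Qed.

Lemma distxx x : dist x x = 0%N.
Proof. by apply/eqP; rewrite dist_eq0. Qed.

End Distance.

Section DominatingVertex.
Variables (G : graph) (c : gV G).
Hypothesis c_dominating : forall z, z != c -> adj c z.
Implicit Types x y z : gV G.

Lemma adj_dominating x : x != c -> adj x c.
Proof. by move=> xc; rewrite adj_sym c_dominating. Qed.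

Lemma dist_dominating x y :
  dist x y = if x == y then 0%N else if adj x y then 1%N else 2%N.
Proof.
case: eqP => [<-|/eqP xy]; first exact: distxx.
case: ifP => [adj_xy|nadj_xy].
  apply: dist_least; last by rewrite reachn1.
    by apply/card_gt1P; exists x, y.
  by case=> // _; rewrite reachn0.
have xc : x != c.
  by apply: contraFneq _ nadj_xy => exc; rewrite exc c_dominating // -exc eq_sym.
have yc : y != c by apply: contraFneq _ nadj_xy => ->; rewrite adj_dominating.
apply: dist_least; last by apply: (@reachn2 _ _ c); rewrite ?adj_dominating ?c_dominating.
  by apply/card_gt2P; exists x, y, c; rewrite [c == x]eq_sym.
by case=> [|[|]] // _; rewrite ?reachn0 ?reachn1 ?nadj_xy.
Qed.

Lemma connected_dominating : connected G.
Proof.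
have to_c x : connect (@adj G) x c.
  by case: (eqVneq x c) => [->|xc]; rewrite ?connect0 // connect1 ?adj_dominating.
move=> x y; apply: connect_trans (to_c x) _.
by rewrite (sym_connect_sym (@adj_sym G)).
Qed.

Lemma distk_dominating k : (0 < k)%N -> @distk k G = @dist G.
Proof.
move=> k_gt0; apply/funext => x; apply/funext => y.
rewrite /distk dist_dominating; apply/minn_idPl.
by case: ifP => _ //; case: ifP => _ //; rewrite ltnS.
Qed.

Lemma dimkf_dominating (R : realType) k : (0 < k)%N -> dimkf R k G = dimf R G.
Proof. by move=> k_gt0; rewrite /dimkf /ktrunc_resolving_fun distk_dominating. Qed.

Lemma dist_twins a b : (forall z, z != a -> z != b -> adj a z = adj b z) ->
  forall z, z != a -> z != b -> dist a z = dist b z.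
Proof.
move=> twins z za zb; rewrite !dist_dominating twins //.
by rewrite eq_sym (negbTE za) eq_sym (negbTE zb).
Qed.

End DominatingVertex.

Section Sums.
Variables (R : realFieldType) (T : finType) (g : T -> R).
Hypothesis g_ge0 : forall z, 0 <= g z.

Lemma ler_term_sum (P : pred T) z : P z -> g z <= \sum_(y | P y) g y.
Proof. by move=> Pz; rewrite (bigD1 z) //= lerDl sumr_ge0. Qed.

Lemma ler_sum_pred (P : pred T) : \sum_(z | P z) g z <= \sum_z g z.
Proof. by rewrite [X in _ <= X](bigID P) /= lerDl sumr_ge0. Qed.

(* At most one element of [S] can have weight below [1/2]. *)
Lemma sum_pairwise_ge1 (S : pred T) :
  (forall a b, S a -> S b -> a != b -> 1 <= g a + g b) ->
  (#|S|%:R - 1) / 2 <= \sum_(z | S z) g z.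
Proof.
move=> pair_ge1.
have half_sum (P : pred T) : (forall z, P z -> 1 / 2 <= g z) ->
    #|P|%:R / 2 <= \sum_(z | P z) g z.
  move=> P_ge; apply: le_trans (ler_sum _ P_ge).
  by rewrite sumr_const -[1 / 2 *+ _]mulr_natl mul1r.
case: (boolP [exists a, S a && (g a < 1 / 2)]) => [/existsP [a /andP[Sa ga]]|].
  rewrite (bigD1 a) //= (cardD1x Sa) natrD.
  have ge_half z : S z && (z != a) -> 1 / 2 <= g z.
    case/andP=> Sz za; have := pair_ge1 a z Sa Sz; rewrite eq_sym za => /(_ isT).
    lra.
  have := half_sum _ ge_half; have := g_ge0 a; lra.
move/existsPn=> none_small.
have ge_half z : S z -> 1 / 2 <= g z.
  by move=> Sz; have := none_small z; rewrite Sz /= -leNgt.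
have := half_sum _ ge_half; lra.
Qed.
End Sums.

Section FractionalDimension.
Variables (R : realType) (G : graph).
Implicit Types (g : gV G -> R) (x y : gV G).

Lemma resolving_fun_ge0 g : resolving_fun g -> forall z, 0 <= g z.
Proof. by case=> g01 _ z; case/andP: (g01 z). Qed.

Lemma resolving_fun1 : resolving_fun (fun _ : gV G => 1 : R).
Proof.
split=> [z|x y xy]; first by rewrite ler01 lexx.
by apply: (ler_term_sum (fun=> ler01) (z := x)); rewrite distxx eq_sym dist_eq0 eq_sym.
Qed.

Lemma dimf_le_sum g : resolving_fun g -> dimf R G <= \sum_z g z.
Proof.
move=> g_res; apply: ge_inf; last by exists g.
by exists 0 => _ [h [h_res ->]]; apply: sumr_ge0 => z _; apply: resolving_fun_ge0.
Qed.

Lemma le_dimf (a : R) :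
  (forall g, resolving_fun g -> a <= \sum_z g z) -> a <= dimf R G.
Proof.
move=> lb; apply: lb_le_inf; last by move=> _ [g [g_res ->]]; apply: lb.
by exists (\sum_(z : gV G) 1), (fun _ => 1); split=> //; apply: resolving_fun1.
Qed.

Lemma dimf_ge1 x y : x != y -> 1 <= dimf R G.
Proof.
move=> xy; apply: le_dimf => g g_res; apply: le_trans (g_res.2 x y xy) _.
exact/ler_sum_pred/resolving_fun_ge0.
Qed.

Lemma resolving_fun_twins g a b : resolving_fun g -> a != b ->
  (forall z, z != a -> z != b -> dist a z = dist b z) -> 1 <= g a + g b.
Proof.
move=> g_res ab twins; apply: le_trans (g_res.2 a b ab) _.
have dist_ab : dist a a != dist b a by rewrite distxx eq_sym dist_eq0 eq_sym.
rewrite (bigD1 a) //= (bigD1 b) /=; last by rewrite distxx dist_eq0 ab eq_sym.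
rewrite big1 ?addr0 // => z /andP[/andP[dz za] zb].
by move: dz; rewrite twins ?eqxx.
Qed.

End FractionalDimension.

Lemma exp2_gt_linear m : exists t, (m * t.+1 < 2 ^ t)%N.
Proof.
exists (4 * m + 4)%N.
have a_lt := ltn_expl (2 * m + 2) (isT : (1 < 2)%N).
have -> : (4 * m + 4 = (2 * m + 2) + (2 * m + 2))%N by lia.
rewrite expnD.
move: (2 ^ (2 * m + 2))%N a_lt => X a_lt.
have : ((2 * m + 3) * (2 * m + 3) <= X * X)%N by apply: leq_mul; lia.
lia.
Qed.

Section Construction.
Variable t : nat.

Definition cone_vertex : finType := (unit + ('I_t + {set 'I_t}))%type.

Definition apex : cone_vertex := inl tt.

Definition star_adj (x y : cone_vertex) : bool :=
  match x, y with
  | inl _, inr _ | inr _, inl _ => true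
  | _, _ => false
  end.

Definition incidence_adj (x y : cone_vertex) : bool :=
  match x, y with
  | inr (inl s), inr (inr A) | inr (inr A), inr (inl s) => s \in A
  | _, _ => false
  end.

Definition cone_adj (x y : cone_vertex) : bool := star_adj x y || incidence_adj x y.

Lemma star_adj_sym : symmetric star_adj.
Proof. by move=> [[]|[s|A]] [[]|[s'|B]]. Qed.

Lemma star_adj_irr : irreflexive star_adj.
Proof. by move=> [[]|[s|A]]. Qed.

Lemma cone_adj_sym : symmetric cone_adj.
Proof. by move=> [[]|[s|A]] [[]|[s'|B]]. Qed.

Lemma cone_adj_irr : irreflexive cone_adj.
Proof. by move=> [[]|[s|A]]. Qed.

Definition star_graph : graph := Graph star_adj_sym star_adj_irr.
Definition incidence_cone : graph := Graph cone_adj_sym cone_adj_irr.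

Lemma star_apex_dominating (z : gV star_graph) :
  z != apex -> adj (apex : gV star_graph) z.
Proof. by case: z => [[]|[s|A]]; rewrite ?eqxx. Qed.

Lemma cone_apex_dominating (z : gV incidence_cone) :
  z != apex -> adj (apex : gV incidence_cone) z.
Proof. by case: z => [[]|[s|A]]; rewrite ?eqxx. Qed.

Lemma star_subgraph_cone : subgraph star_graph incidence_cone.
Proof. by exists id; split=> // x y; rewrite /= /cone_adj => ->. Qed.

Lemma card_cone_vertex : #|cone_vertex| = (1 + (t + 2 ^ t))%N.
Proof.
by rewrite !card_sum card_unit card_ord -cardsT -powersetT card_powerset cardsT card_ord.
Qed.

End Construction.

Section Dimensions.
Variables (R : realType) (t : nat).

Definition point_weight (z : cone_vertex t) : R := if z is inr (inr _) then 0 else 1.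

Lemma point_weight_resolving : resolving_fun (G := incidence_cone t) point_weight.
Proof.
have w_ge0 z : 0 <= point_weight z by case: z => [[]|[s|A]]; rewrite /= ?lexx ?ler01.
split=> [z|x y xy]; first by rewrite w_ge0; case: z => [[]|[s|A]]; rewrite /= ?lexx ?ler01.
have resolved_by z : dist x z != dist y z -> point_weight z = 1 ->
    1 <= \sum_(z | dist x z != dist y z) point_weight z.
  by move=> dz wz; rewrite -wz; apply: ler_term_sum.
have [wx|wy|[A [B [ex ey]]]] : [\/ point_weight x = 1, point_weight y = 1 |
    exists A B, x = inr (inr A) /\ y = inr (inr B)].
- case: x y {xy resolved_by} => [[]|[s|A]] [[]|[s'|B]];
    by [apply: Or31 | apply: Or32 | apply: Or33; exists A, B].
- by apply: (resolved_by x) => //; rewrite distxx eq_sym dist_eq0 eq_sym.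
- by apply: (resolved_by y) => //; rewrite distxx dist_eq0.
subst x y.
have [s sAB] : exists s, (s \in A) != (s \in B).
  apply/existsP; apply: contraNT xy => /existsPn same.
  suff -> : A = B by [].
  by apply/setP => s; apply/eqP/negPn; apply: same.
apply: (resolved_by (inr (inl s))) => //.
rewrite !(dist_dominating (@cone_apex_dominating t)) /= /cone_adj /=.
by case: (s \in A) (s \in B) sAB => [] [].
Qed.

Lemma sum_point_weight : \sum_z point_weight z = t.+1%:R.
Proof.
rewrite !big_sumType /= [X in _ + (_ + X)]big1 // addr0 !sumr_const.
by rewrite card_ord card_unit nat1r.
Qed.

Lemma dimf_incidence_cone_le : dimf R (incidence_cone t) <= t.+1%:R.
Proof. by rewrite -sum_point_weight; apply/dimf_le_sum/point_weight_resolving. Qed.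

Lemma dimf_incidence_cone_ge1 : 1 <= dimf R (incidence_cone t).
Proof. by apply: (@dimf_ge1 R (incidence_cone t) (apex t) (inr (inr finset.set0))). Qed.

Lemma dimf_star_ge : ((t + 2 ^ t)%:R - 1) / 2 <= dimf R (star_graph t).
Proof.
apply: le_dimf => g g_res; have g_ge0 := resolving_fun_ge0 g_res.
apply: le_trans (ler_sum_pred g_ge0 (predC1 (apex t))).
rewrite (_ : (t + 2 ^ t)%N = #|predC1 (apex t)|); last first.
  by rewrite cardC1 card_cone_vertex.
apply: sum_pairwise_ge1 => // a b /= a_apex b_apex ab.
apply: resolving_fun_twins g_res ab _.
apply: (dist_twins (@star_apex_dominating t)) => z _ _.
by move: a b z a_apex b_apex => [[]|[?|?]] [[]|[?|?]] [[]|[?|?]].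
Qed.

Lemma dimf_star_cone_ratio :
  ((2 ^ t)%:R - 1) / (2 * t.+1%:R) <=
  dimf R (star_graph t) / dimf R (incidence_cone t).
Proof.
have dG_ge1 := dimf_incidence_cone_ge1; have dG_le := dimf_incidence_cone_le.
have dH_ge := dimf_star_ge; rewrite natrD in dH_ge.
have t_ge0 : 0 <= t%:R :> R by [].
have e_ge1 : 1 <= (2 ^ t)%:R :> R by rewrite ler1n expn_gt0.
rewrite ler_pdivlMr ?(lt_le_trans ltr01) //.
set q := _ / _.
have q_ge0 : 0 <= q by rewrite divr_ge0 ?subr_ge0 // mulr_ge0.
have q_t : q * t.+1%:R = ((2 ^ t)%:R - 1) / 2.
  by rewrite /q; field; rewrite nat1r pnatr_eq0.
have := ler_wpM2l q_ge0 dG_le; lra.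
Qed.

End Dimensions.

Theorem corollary4p2 (R : realType) (k : nat) (hk : (0 < k)%N) (C : R) (hC : 0 < C) :
  exists H G : graph,
    [/\ connected H, connected G, subgraph H G,
        C < dimf R H / dimf R G &
        C < dimkf R k H / dimkf R k G].
Proof.
pose N := (Num.trunc C).+1.
have [t lt_2t] := exp2_gt_linear (2 * N).
have C_lt : C < dimf R (star_graph t) / dimf R (incidence_cone t).
  apply: lt_le_trans (dimf_star_cone_ratio R t).
  rewrite ltr_pdivlMr ?mulr_gt0 //.
  have C_lt_N : C < N%:R := truncnS_gt C.
  have : (2 * N * t.+1).+1%:R <= (2 ^ t)%:R :> R by rewrite ler_nat.
  rewrite -natr1 !natrM; have : 0 < t.+1%:R :> R by [].
  nra.
exists (star_graph t), (incidence_cone t); split.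
- exact: connected_dominating (@star_apex_dominating t).
- exact: connected_dominating (@cone_apex_dominating t).
- exact: star_subgraph_cone.
- exact: C_lt.
- by rewrite (dimkf_dominating (@star_apex_dominating t)) //
    (dimkf_dominating (@cone_apex_dominating t)).
Qed.
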